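(* Let $G$ be a finite simple graph and let $t\le 0$ be an integer. Then $G$ has a unique maximal D-chain of order $t$. More precisely, if $L\colon G_0\ge G_1\ge\cdots\ge G_k$ and $L'\colon G'_0\ge G'_1\ge\cdots\ge G'_k$ are two D-chains of order $t$ of $G$, both of the maximum possible length $k$, then the chain $G_0\cup G'_0\ge G_1\cup G'_1\ge\cdots\ge G_k\cup G'_k$ (where $G_i\cup G'_i$ denotes the subgraph of $G$ induced by $V(G_i)\cup V(G'_i)$) is again a D-chain of order $t$ of $G$ of length $k$.
   Context: All graphs are finite, without loops or multiple edges. For graphs $H,G$ write $H\le G$ if $H$ is a subgraph of $G$, and $H<G$ if $H\le G$ and $H\ne G$. Let $t$ be an integer. A D-chain of order $t$ of $G$ is a chain $L\colon G_0\ge G_1\ge\cdots\ge G_k$ of nonempty subgraphs of $G$ with $G_0=G$, where $G_i$ is a vertex-induced subgraph of $G_{i-1}$ for $1\le i\le k$, such that for every $0\le i\le k$, every vertex $v$ of $G_i$ has at least $i$ neighbors in $G_j$, where $j=\max\{0,i+t\}$. The number $k$ is the length $|L|$ of the chain. A D-chain $L\colon G_0\ge\cdots\ge G_k$ of order $t$ is maximal if (i) there is no D-chain of order $t$ of $G$ of length greater than $k$, and (ii) there is no D-chain $L'\colon G'_0\ge G'_1\ge\cdots\ge G'_k$ of order $t$ of $G$ such that $G_i<G'_i$ for some $1\le i\le k$. (For $t\le 0$, the one-term chain $G_0=G$ is a D-chain of order $t$, so D-chains exist.) *)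

From HB Require Import structures.
From mathcomp Require Import all_boot all_order all_algebra.
Set Implicit Arguments. Unset Strict Implicit. Unset Printing Implicit Defensive.
Import Order.TTheory GRing.Theory Num.Theory.

(* A vertex-induced subgraph of G is identified with
   its vertex set A : {set T}.  A chain G_0 >= ... >= G_k of subgraphs, each
   vertex-induced in the previous one, with G_0 = G, consists of vertex-induced
   subgraphs of G, so it is represented by V : nat -> {set T} (only the values
   at 0..k matter). *)

Definition simple_graph (T : finType) (e : rel T) : Prop :=
  symmetric e /\ irreflexive e.

Definition deg_in (T : finType) (e : rel T) (A : {set T}) (v : T) : nat :=
  #|[set u in A | e v u]|.

Definition dindex (t : int) (i : nat) : nat :=
  `|Num.max 0%R (i%:Z + t)%R|%N.

Definition dchain (T : finType) (e : rel T) (t : int) (k : nat)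
    (V : nat -> {set T}) : Prop :=
  [/\ V 0 = [set: T],
      (forall i, i < k -> V i.+1 \subset V i),
      (forall i, i <= k -> V i != set0) &
      (forall i, i <= k -> forall v, v \in V i -> i <= deg_in e (V (dindex t i)) v)].

Definition max_dchain (T : finType) (e : rel T) (t : int) (k : nat)
    (V : nat -> {set T}) : Prop :=
  [/\ dchain e t k V,
      (forall k' V', dchain e t k' V' -> k' <= k) &
      ~ (exists V', dchain e t k V' /\
            exists i, [/\ 1 <= i, i <= k & V i \proper V' i])].

From mathcomp Require Import all_boot all_order all_algebra.
From Stdlib Require Import Classical.
Import Order.TTheory GRing.Theory Num.Theory.

(* Degrees only grow when the vertex set grows, so the termwise union of two
   D-chains of the same length is again a D-chain (for any order [t]).  Among
   the chains of maximum length take one, [V], of largest total size: its union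
   with any other maximum-length chain [V'] cannot be heavier, hence
   [V' i \subset V i] for all [i].  This makes [V] maximal, and forces every
   maximal chain to coincide with [V]. *)

Lemma ex_max_bounded {P : nat -> Prop} {b : nat} :
  (exists n, P n) -> (forall n, P n -> n <= b) ->
  exists n, P n /\ forall m, P m -> m <= n.
Proof.
elim: b => [|b IHb] exP leP.
  have [n Pn] := exP; exists n; split=> // m Pm.
  by rewrite (leq_trans (leP m Pm)).
have [Pb1 | notPb1] := classic (P b.+1); first by exists b.+1.
apply: IHb exP _ => n Pn; have := leP n Pn.
by rewrite leq_eqVlt => /predU1P[n_eq | //]; rewrite -n_eq in notPb1.
Qed.

Section DChains.

Context {T : finType} {e : rel T} {t : int}.

Lemma deg_inS {A B : {set T}} (v : T) :
  A \subset B -> deg_in e A v <= deg_in e B v.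
Proof.
move=> sAB; apply/subset_leq_card/subsetP => u.
by rewrite !inE => /andP[/(subsetP sAB) -> ->].
Qed.

Lemma dchainU {k : nat} {V V' : nat -> {set T}} :
  dchain e t k V -> dchain e t k V' -> dchain e t k (fun i => V i :|: V' i).
Proof.
case=> [V0 sV nzV degV] [V'0 sV' nzV' degV']; split.
- by rewrite V0 V'0 setUid.
- by move=> i lt_ik; apply: setUSS; [apply: sV | apply: sV'].
- by move=> i le_ik; rewrite setU_eq0 negb_and nzV.
- move=> i le_ik v; rewrite inE => /orP[vV | vV'].
  + exact: leq_trans (degV i le_ik v vV) (deg_inS v (subsetUl _ _)).
  + exact: leq_trans (degV' i le_ik v vV') (deg_inS v (subsetUr _ _)).
Qed.

Lemma dchain_length_le_card {k : nat} {V : nat -> {set T}} :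
  dchain e t k V -> k <= #|T|.
Proof.
case=> _ _ nzV degV; have /set0Pn[v vVk] := nzV k (leqnn k).
exact: leq_trans (degV k (leqnn k) v vVk) (max_card _).
Qed.

Lemma dchain0 : 0 < #|T| -> dchain e t 0 (fun _ => [set: T]).
Proof.
move=> /card_gt0P[x _]; split=> // [i _ | i].
  by apply/set0Pn; exists x; rewrite inE.
by rewrite leqn0 => /eqP-> v.
Qed.

Lemma ex_max_length_dchain :
  0 < #|T| -> exists k, (exists V, dchain e t k V) /\
    forall k' V', dchain e t k' V' -> k' <= k.
Proof.
move=> T_gt0; pose P k := exists V, dchain e t k V.
have leP k : P k -> k <= #|T| by case=> V; apply: dchain_length_le_card.
have [k [exV maxk]] := ex_max_bounded (ex_intro P 0 (ex_intro _ _ (dchain0 T_gt0))) leP.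
by exists k; split=> // k' V' chV'; apply: maxk; exists V'.
Qed.

Definition chain_weight (k : nat) (V : nat -> {set T}) : nat :=
  \sum_(i < k.+1) #|V i|.

Lemma chain_weight_le_card (k : nat) (V : nat -> {set T}) :
  chain_weight k V <= k.+1 * #|T|.
Proof.
rewrite -[k.+1 in X in _ <= X]card_ord -sum_nat_const.
by apply: leq_sum => i _; apply: max_card.
Qed.

Lemma chain_weight_sub_eq {k : nat} {V W : nat -> {set T}} :
  (forall i, i <= k -> V i \subset W i) -> chain_weight k W <= chain_weight k V ->
  forall i, i <= k -> V i = W i.
Proof.
move=> sVW leWV i le_ik; apply/eqP; rewrite eqEproper sVW //=.
apply: contraTN leWV => ltVWi; rewrite -ltnNge /chain_weight.
rewrite (bigD1 (Ordinal (le_ik : i < k.+1))) //=.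
rewrite [X in _ < X](bigD1 (Ordinal (le_ik : i < k.+1))) //= -addSn.
rewrite leq_add ?proper_card //; apply: leq_sum => j _.
by apply/subset_leq_card/sVW; rewrite -ltnS.
Qed.

Lemma ex_heaviest_dchain {k : nat} {W : nat -> {set T}} :
  dchain e t k W -> exists V, dchain e t k V /\
    forall V', dchain e t k V' -> chain_weight k V' <= chain_weight k V.
Proof.
move=> chW; pose P n := exists V, dchain e t k V /\ chain_weight k V = n.
have leP n : P n -> n <= k.+1 * #|T|.
  by case=> V [_ <-]; apply: chain_weight_le_card.
have [_ [[V [chV <-]] maxw]] := ex_max_bounded (ex_intro P _ (ex_intro _ W (conj chW erefl))) leP.
by exists V; split=> // V' chV'; apply: maxw; exists V'.
Qed.

Lemma heaviest_dchain_sub {k : nat} {V V' : nat -> {set T}} :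
  dchain e t k V ->
  (forall W, dchain e t k W -> chain_weight k W <= chain_weight k V) ->
  dchain e t k V' -> forall i, i <= k -> V' i \subset V i.
Proof.
move=> chV heavyV chV' i le_ik.
have VU := chain_weight_sub_eq (fun j _ => subsetUl (V j) (V' j))
  (heavyV _ (dchainU chV chV')) i le_ik.
by rewrite [V i]VU subsetUr.
Qed.

End DChains.

Theorem propositionC1 (T : finType) (e : rel T) (t : int) :
  simple_graph e -> (t <= 0)%R -> 0 < #|T| ->
  (forall k (V V' : nat -> {set T}),
      dchain e t k V -> dchain e t k V' ->
      (forall k'' W, dchain e t k'' W -> k'' <= k) ->
      dchain e t k (fun i => V i :|: V' i)) /\
  (exists k (V : nat -> {set T}), max_dchain e t k V /\
      forall k' V', max_dchain e t k' V' ->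
        k' = k /\ forall i, i <= k -> V' i = V i).
Proof.
move=> _ _ T_gt0; split=> [k V V' chV chV' _ | ]; first exact: dchainU.
have [k [[W chW] maxk]] := ex_max_length_dchain (e := e) (t := t) T_gt0.
have [V [chV heavyV]] := ex_heaviest_dchain chW.
have subV := heaviest_dchain_sub chV heavyV.
have maxV : max_dchain e t k V.
  split=> // -[V' [chV' [i [_ le_ik ltVV'i]]]].
  by have := proper_subn ltVV'i; rewrite subV.
exists k, V; split=> // k' V' [chV' maxk' notV'proper].
have k'_eq : k' = k by apply/eqP; rewrite eqn_leq (maxk' _ _ chV) (maxk _ _ chV').
subst k'; split=> // -[_ | i le_ik].
  by case: chV => ->; case: chV' => ->.
apply/eqP; rewrite eqEproper subV //=; apply/negP => ltV'Vi.
by apply: notV'proper; exists V; split=> //; exists i.+1.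
Qed.
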